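(* Let $n,m,n_g,n_w,r$, $A\in\mathbb{R}^{n\times n}$, $S\in\mathbb{R}^{n\times n_g}$, $C\in\mathbb{R}^{m\times n}$, $D_\omega\in\mathbb{R}^{n\times n_w}$ be given, $n_z=n+rn_g$, $d_n=(r-1)n_g$, and define $$A_a=\begin{bmatrix} A & S & 0\\ 0 & 0 & I_{d_n}\\ 0&0&0\end{bmatrix},\quad D_a=\begin{bmatrix} D_\omega & 0\\ 0&0\\ 0 & I_{n_g}\end{bmatrix},\quad C_a=\begin{bmatrix} C & 0\end{bmatrix},\quad \bar C_a=\begin{bmatrix} I_n & 0 & 0\\ 0 & I_{n_g} & 0\end{bmatrix}.$$ Suppose there exist $P\in\mathbb{R}^{n_z\times n_z}$, $P\succ 0$, $R,Q\in\mathbb{R}^{n_z\times m}$ and a scalar $\bar\lambda>0$ such that $$\begin{bmatrix} X & -(P+RC_a)D_a & \bar C_a^\top\\ * & -\bar\lambda I & 0\\ * & * & -\bar\lambda I\end{bmatrix}\prec 0,\qquad X:=A_a^\top P+A_a^\top C_a^\top R^\top-C_a^\top Q^\top+PA_a+RC_aA_a-QC_a.$$ Let $E=P^{-1}R$, $K=P^{-1}Q$, $M=I+EC_a$, $N=MA_a-KC_a$, and $T_{e_d\omega_a}(s)=-\bar C_a(sI-N)^{-1}MD_a$ (the transfer matrix from $\omega_a$ to $e_d=\bar C_a e$ of the error dynamics $\dot e=Ne-MD_a\omega_a+[K\ -E]\nu_a$). Then $\|T_{e_d\omega_a}\|_\infty<\bar\lambda$.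
   Context: $*$ denotes the block that makes the matrix symmetric. The $H_\infty$-norm is $\|T\|_\infty=\sup_{\mu\in\mathbb{R}^+}\sigma_{\max}(T(i\mu))$. *)

From HB Require Import structures.
From mathcomp Require Import all_boot all_order all_algebra.
From mathcomp Require Import all_classical all_reals.
From mathcomp Require Import ereal.
From mathcomp Require Import complex.
Set Implicit Arguments. Unset Strict Implicit. Unset Printing Implicit Defensive.
Import Order.TTheory GRing.Theory Num.Theory.
Local Open Scope ring_scope.

Definition posdef (R : realType) (k : nat) (M : 'M[R]_k) : Prop :=
  M^T = M /\ forall x : 'cV[R]_k, x != 0 -> 0 < (x^T *m M *m x) 0 0.
Definition negdef (R : realType) (k : nat) (M : 'M[R]_k) : Prop :=
  posdef (- M).

Definition cvnorm (R : realType) (k : nat) (v : 'cV[R[i]]_k) : R :=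
  Num.sqrt (\sum_(j < k) (complex.Re (v j 0) ^+ 2 + complex.Im (v j 0) ^+ 2)).

Definition sigma_max (R : realType) (p q : nat) (M : 'M[R[i]]_(p, q)) : \bar R :=
  ereal_sup [set ((cvnorm (M *m v) / cvnorm v)%:E) | v in [set v : 'cV[R[i]]_q | v != 0]].

Definition hinf_norm (R : realType) (p q : nat) (T : R[i] -> 'M[R[i]]_(p, q)) : \bar R :=
  ereal_sup [set sigma_max (T (Complex 0 mu)) | mu in [set mu : R | 0 <= mu]].

Definition cmx (R : realType) (p q : nat) (M : 'M[R]_(p, q)) : 'M[R[i]]_(p, q) :=
  map_mx (fun x : R => Complex x 0) M.

Section Aug.
Variables (R : realType) (n m ng nw r : nat).
Local Notation dn := ((r - 1) * ng)%N.
Local Notation nz := (n + (ng + dn))%N.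

Lemma rows_eq : (n + (dn + ng) = nz)%N.
Proof. by rewrite (addnC dn). Qed.

(* A_a = [A S 0; 0 0 I_dn; 0 0 0], rows (n,dn,ng), cols (n,ng,dn) *)
Definition Aa (A : 'M[R]_n) (S : 'M[R]_(n, ng)) : 'M[R]_nz :=
  castmx (rows_eq, erefl nz)
    (block_mx A (row_mx S 0) 0
       (col_mx (row_mx (0 : 'M[R]_(dn, ng)) (1%:M : 'M[R]_dn)) 0)).

(* D_a = [D_w 0; 0 0; 0 I_ng], rows (n,dn,ng), cols (nw,ng) *)
Definition Da (Dw : 'M[R]_(n, nw)) : 'M[R]_(nz, nw + ng) :=
  castmx (rows_eq, erefl (nw + ng)%N)
    (col_mx (row_mx Dw (0 : 'M[R]_(n, ng)))
       (col_mx (0 : 'M[R]_(dn, nw + ng)) (row_mx (0 : 'M[R]_(ng, nw)) (1%:M : 'M[R]_ng)))).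

Definition Ca (C : 'M[R]_(m, n)) : 'M[R]_(m, nz) := row_mx C 0.

Definition Cbara : 'M[R]_(n + ng, nz) :=
  block_mx (1%:M : 'M[R]_n) 0 0 (row_mx (1%:M : 'M[R]_ng) (0 : 'M[R]_(ng, dn))).
End Aug.

From mathcomp Require Import all_boot all_order all_algebra.
From mathcomp Require Import all_classical all_reals.
From mathcomp Require Import ereal.
From mathcomp Require Import complex.
From mathcomp Require Import ring lra.
Import Order.TTheory GRing.Theory Num.Theory.
Local Open Scope ring_scope.

(* For s = i mu and an input v, the response x = (s - N)^-1 G v with G = M D_a
   satisfies N x = s x - G v.  Since the X block of the LMI is P N + N^T P,
   testing the LMI on (x, -v, Cbar x / lam) makes the Lyapunov term
   (s + conj s) x^* P x vanish and cancels the cross terms x^* P G v against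
   the off-diagonal block, leaving |Cbar x|^2 / lam - lam |v|^2 <= - e |(x, v)|^2,
   where e > 0 is a coercivity margin of the strict LMI.  Hence
   |T(i mu) v|^2 <= lam (lam - e) |v|^2 uniformly in mu, and taking v = 0 shows
   that s - N is invertible. *)

Set Implicit Arguments.
Unset Strict Implicit.

Section QuadraticForm.
Variable R : realType.

Definition qform k (M : 'M[R]_k) (a b : 'cV[R]_k) : R := (a^T *m M *m b) 0 0.

Lemma qform_sym k (M : 'M[R]_k) a b : M^T = M -> qform M a b = qform M b a.
Proof.
move=> M_sym; rewrite /qform.
have -> : (a^T *m M *m b) 0 0 = (a^T *m M *m b)^T 0 0 by rewrite !mxE.
by rewrite !trmx_mul trmxK M_sym mulmxA.
Qed.

Lemma qform0r k (M : 'M[R]_k) a : qform M a 0 = 0.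
Proof. by rewrite /qform mulmx0 mxE. Qed.

Lemma qform_subZ k (M : 'M[R]_k) a b t :
  qform M (a - t *: b) (a - t *: b) =
  qform M a a - t * qform M a b - t * qform M b a + t ^+ 2 * qform M b b.
Proof.
rewrite /qform.
have -> : (a - t *: b)^T = a^T - t *: b^T by rewrite linearB linearZ.
rewrite !mulmxBl !mulmxBr -!scalemxAl -!scalemxAr.
move: (a^T *m M *m a) (a^T *m M *m b) (b^T *m M *m a) (b^T *m M *m b) => ? ? ? ?.
by rewrite !mxE; ring.
Qed.

Lemma posdef_qform_ge0 k (M : 'M[R]_k) a : posdef M -> 0 <= qform M a a.
Proof.
case=> _ M_pos; have [->|a_neq0] := eqVneq a 0; first by rewrite qform0r.
exact/ltW/M_pos.
Qed.

Lemma posdef_CauchySchwarz k (M : 'M[R]_k) a b :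
  posdef M -> qform M a b ^+ 2 <= qform M a a * qform M b b.
Proof.
move=> M_pd; have [M_sym M_pos] := M_pd.
have [->|b_neq0] := eqVneq b 0; first by rewrite !qform0r expr0n mulr0.
have bb_gt0 : 0 < qform M b b := M_pos b b_neq0.
set t := qform M a b / qform M b b.
rewrite -subr_ge0.
have -> : qform M a a * qform M b b - qform M a b ^+ 2 =
    qform M b b * qform M (a - t *: b) (a - t *: b).
  by rewrite qform_subZ (qform_sym b a M_sym) /t; field; rewrite gt_eqF.
exact: mulr_ge0 (ltW bb_gt0) (posdef_qform_ge0 _ M_pd).
Qed.

Lemma qform_le_sum_norm k (M : 'M[R]_k) a :
  qform M a a <= (\sum_j \sum_i `|M i j|) * (a^T *m a) 0 0.
Proof.
set S := (a^T *m a) 0 0.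
have sqr_le i : a i 0 ^+ 2 <= S.
  rewrite /S mxE (bigD1 i) //= mxE -expr2 lerDl.
  by apply: sumr_ge0 => l _; rewrite mxE -expr2 sqr_ge0.
have coord_le i j : `|a i 0| * `|a j 0| <= S.
  have [le_ij|lt_ji] := leP `|a i 0| `|a j 0|.
    apply: le_trans (sqr_le j); rewrite -real_normK ?num_real // expr2.
    by rewrite ler_wpM2r.
  apply: le_trans (sqr_le i); rewrite -real_normK ?num_real // expr2.
  by rewrite ler_wpM2l // ltW.
rewrite /qform mxE mulr_suml; apply: ler_sum => j _.
rewrite mxE !mulr_suml; apply: ler_sum => i _.
rewrite mxE; apply: le_trans (ler_norm _) _.
by rewrite !normrM mulrAC mulrC ler_wpM2l.
Qed.

Lemma posdef_unitmx k (M : 'M[R]_k) : posdef M -> M \in unitmx.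
Proof.
case=> _ M_pos; rewrite unitmxE unitfE; apply/negP => /det0P [v v_neq0 vM].
have := M_pos v^T; rewrite trmx_eq0 trmxK vM mul0mx mxE ltxx.
by move/(_ v_neq0).
Qed.

(* With b = M^-1 a, Cauchy-Schwarz gives
   |a|^4 = (a^T M b)^2 <= (a^T M a) (a^T M^-T a) <= (a^T M a) c |a|^2. *)
Lemma posdef_coercive k (M : 'M[R]_k) : posdef M ->
  exists2 e, 0 < e & forall a, e * (a^T *m a) 0 0 <= qform M a a.
Proof.
move=> M_pd; have M_unit := posdef_unitmx M_pd.
set c := \sum_j \sum_i `|(invmx M)^T i j|.
have c_ge0 : 0 <= c by do 2!apply: sumr_ge0 => ? _.
exists (c + 1)^-1; first by rewrite invr_gt0 ltr_wpDl.
move=> a; set S := (a^T *m a) 0 0.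
have S_ge0 : 0 <= S by rewrite /S mxE; apply: sumr_ge0 => l _; rewrite mxE -expr2 sqr_ge0.
have S_eq : S = qform M a (invmx M *m a).
  by rewrite /qform -mulmxA (mulmxA M) mulmxV // mul1mx.
have inv_eq : qform M (invmx M *m a) (invmx M *m a) = qform (invmx M)^T a a.
  by rewrite /qform trmx_mul -!mulmxA (mulmxA M) mulmxV // mul1mx !mulmxA.
have := posdef_CauchySchwarz a (invmx M *m a) M_pd; rewrite -S_eq inv_eq => CS.
have := qform_le_sum_norm (invmx M)^T a; rewrite -/c -/S => inv_le.
have qa_ge0 := posdef_qform_ge0 a M_pd.
rewrite mulrC ler_pdivrMr ?ltr_wpDl //.
have [S_le0|S_gt0] := leP S 0.
  by apply: le_trans S_le0 _; rewrite mulr_ge0 ?addr_ge0.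
have : S * S <= qform M a a * c * S.
  by rewrite -expr2 -mulrA; apply: le_trans CS _; exact: ler_wpM2l.
rewrite ler_pM2r // => S_le; apply: le_trans S_le _.
by rewrite mulrDr mulr1 lerDl.
Qed.

Lemma negdef_coercive k (L : 'M[R]_k) : negdef L ->
  exists2 e, 0 < e & forall a : 'cV_k, (a^T *m L *m a) 0 0 <= - e * (a^T *m a) 0 0.
Proof.
rewrite /negdef => /posdef_coercive [e e_gt0 le_e]; exists e => // a.
have := le_e a; rewrite /qform mulmxN mulNmx.
by rewrite mulNr lerNr; move: (a^T *m L *m a) => W; rewrite [(- W) 0 0]mxE.
Qed.

End QuadraticForm.

Section ComplexMatrix.
Variable R : realType.
Local Notation C := R[i].
Local Open Scope complex_scope.

Lemma ReD (w z : C) : complex.Re (w + z) = complex.Re w + complex.Re z.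
Proof. by case: w; case: z. Qed.

Lemma ReN (w : C) : complex.Re (- w) = - complex.Re w.
Proof. by case: w. Qed.

Lemma Re_realM (a : R) (w : C) : complex.Re (a%:C * w) = a * complex.Re w.
Proof. by case: w => x y /=; rewrite mul0r subr0. Qed.

Lemma Re_sum k (F : 'I_k -> C) : complex.Re (\sum_i F i) = \sum_i complex.Re (F i).
Proof. exact: (big_morph _ ReD). Qed.

Lemma conjc_imaginary (mu : R) : conjc (Complex 0 mu) = - Complex 0 mu.
Proof. by apply/eqP; rewrite eq_complex /= oppr0 !eqxx. Qed.

Definition hadj p q (A : 'M[C]_(p, q)) : 'M[C]_(q, p) := (map_mx conjc A)^T.

Lemma hadjM p q k (A : 'M[C]_(p, q)) (B : 'M[C]_(q, k)) :
  hadj (A *m B) = hadj B *m hadj A.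
Proof. by rewrite /hadj map_mxM trmx_mul. Qed.

Lemma hadjN p q (A : 'M[C]_(p, q)) : hadj (- A) = - hadj A.
Proof. by rewrite /hadj map_mxN linearN. Qed.

Lemma hadjB p q (A B : 'M[C]_(p, q)) : hadj (A - B) = hadj A - hadj B.
Proof. by rewrite /hadj map_mxB linearB. Qed.

Lemma hadjZ p q a (A : 'M[C]_(p, q)) : hadj (a *: A) = conjc a *: hadj A.
Proof. by rewrite /hadj map_mxZ linearZ. Qed.

Lemma hadj_col p1 p2 q (A : 'M[C]_(p1, q)) (B : 'M[C]_(p2, q)) :
  hadj (col_mx A B) = row_mx (hadj A) (hadj B).
Proof. by rewrite /hadj map_col_mx tr_col_mx. Qed.

Lemma cmxE p q (A : 'M[R]_(p, q)) : cmx A = map_mx (real_complex R) A.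
Proof. by []. Qed.

Lemma cmxD p q (A B : 'M[R]_(p, q)) : cmx (A + B) = cmx A + cmx B.
Proof. by rewrite !cmxE map_mxD. Qed.

Lemma cmxN p q (A : 'M[R]_(p, q)) : cmx (- A) = - cmx A.
Proof. by rewrite !cmxE map_mxN. Qed.

Lemma cmxM p q k (A : 'M[R]_(p, q)) (B : 'M[R]_(q, k)) :
  cmx (A *m B) = cmx A *m cmx B.
Proof. by rewrite !cmxE map_mxM. Qed.

Lemma hadj_cmx p q (A : 'M[R]_(p, q)) : hadj (cmx A) = cmx A^T.
Proof. by apply/matrixP => i j; rewrite !mxE /= oppr0. Qed.

Definition cvnorm2 k (v : 'cV[C]_k) : R :=
  \sum_j (complex.Re (v j 0) ^+ 2 + complex.Im (v j 0) ^+ 2).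

Lemma cvnormE k (v : 'cV[C]_k) : cvnorm v = Num.sqrt (cvnorm2 v).
Proof. by []. Qed.

Lemma cvnorm2_ge0 k (v : 'cV[C]_k) : 0 <= cvnorm2 v.
Proof. by apply: sumr_ge0 => j _; rewrite addr_ge0 ?sqr_ge0. Qed.

Lemma cvnorm2_gt0 k (v : 'cV[C]_k) : v != 0 -> 0 < cvnorm2 v.
Proof.
move=> v_neq0; have [j vj_neq0] : exists j, v j 0 != 0.
  apply/existsP; apply: contraNT v_neq0; rewrite negb_exists => /forallP v0.
  by apply/eqP/matrixP => i l; rewrite !ord1 mxE; apply/eqP/negbNE/v0.
rewrite /cvnorm2 (bigD1 j) //= ltr_pwDl //; last first.
  by apply: sumr_ge0 => l _; rewrite addr_ge0 ?sqr_ge0.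
move: vj_neq0; case: (v j 0) => x y; rewrite eq_complex /= negb_and.
case/orP => [x_neq0|y_neq0].
  by rewrite ltr_pwDl ?sqr_ge0 // exprn_even_gt0.
by rewrite ltr_wpDl ?sqr_ge0 // exprn_even_gt0.
Qed.

Lemma cvnorm2_0 k : cvnorm2 (0 : 'cV[C]_k) = 0.
Proof. by rewrite /cvnorm2 big1 // => j _; rewrite mxE /= expr0n addr0. Qed.

Lemma cvnorm2N k (v : 'cV[C]_k) : cvnorm2 (- v) = cvnorm2 v.
Proof.
by apply: eq_bigr => j _; rewrite mxE; case: (v j 0) => x y /=; rewrite !sqrrN.
Qed.

Lemma cvnorm2_col k1 k2 (v : 'cV[C]_k1) (w : 'cV[C]_k2) :
  cvnorm2 (col_mx v w) = cvnorm2 v + cvnorm2 w.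
Proof.
by rewrite /cvnorm2 big_split_ord /=; congr (_ + _); apply: eq_bigr => j _;
  rewrite ?col_mxEu ?col_mxEd.
Qed.

Lemma Re_hadj_mulmx k (v : 'cV[C]_k) : complex.Re ((hadj v *m v) 0 0) = cvnorm2 v.
Proof.
rewrite mxE Re_sum; apply: eq_bigr => j _; rewrite !mxE.
by case: (v j 0) => x y /=; ring.
Qed.

Lemma cvnorm2E k (v : 'cV[C]_k) : cvnorm2 v =
  ((map_mx (@complex.Re R) v)^T *m map_mx (@complex.Re R) v) 0 0 +
  ((map_mx (@complex.Im R) v)^T *m map_mx (@complex.Im R) v) 0 0.
Proof. by rewrite !mxE -big_split; apply: eq_bigr => j _ /=; rewrite !mxE; ring. Qed.

Lemma Re_hadj_cmx k (L : 'M[R]_k) (v : 'cV[C]_k) :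
  complex.Re ((hadj v *m cmx L *m v) 0 0) =
  ((map_mx (@complex.Re R) v)^T *m L *m map_mx (@complex.Re R) v) 0 0 +
  ((map_mx (@complex.Im R) v)^T *m L *m map_mx (@complex.Im R) v) 0 0.
Proof.
rewrite !mxE -big_split Re_sum; apply: eq_bigr => j _ /=.
rewrite !mxE !mulr_suml Re_sum -big_split; apply: eq_bigr => i _ /=.
by rewrite !mxE; case: (v i 0) => a b; case: (v j 0) => c d /=; ring.
Qed.

Lemma negdef_cmx_coercive k (L : 'M[R]_k) : negdef L ->
  exists2 e, 0 < e &
    forall v, complex.Re ((hadj v *m cmx L *m v) 0 0) <= - e * cvnorm2 v.
Proof.
move=> /negdef_coercive [e e_gt0 L_le]; exists e => // v.
rewrite Re_hadj_cmx cvnorm2E.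
have := L_le (map_mx (@complex.Re R) v); have := L_le (map_mx (@complex.Im R) v).
lra.
Qed.

Lemma sigma_max_le p q (A : 'M[C]_(p, q)) (c : R) :
  (forall v, cvnorm (A *m v) <= c * cvnorm v) -> (sigma_max A <= c%:E)%E.
Proof.
move=> A_le; apply: ge_ereal_sup => _ [v /= v_neq0 <-].
rewrite lee_fin ler_pdivrMr ?A_le //.
by rewrite cvnormE sqrtr_gt0 cvnorm2_gt0.
Qed.

Lemma hinf_norm_le p q (T : C -> 'M[C]_(p, q)) (c : R) :
  (forall mu v, cvnorm (T (Complex 0 mu) *m v) <= c * cvnorm v) ->
  (hinf_norm T <= c%:E)%E.
Proof. by move=> T_le; apply: ge_ereal_sup => _ [mu _ <-]; exact: sigma_max_le. Qed.

Definition lmi_mx nx nv ny (X : 'M[C]_nx) (B : 'M[C]_(nx, nv))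
    (Cb : 'M[C]_(ny, nx)) (l : C) : 'M[C]_(nx + nv + ny) :=
  block_mx (block_mx X B (hadj B) (- l%:M)) (col_mx (hadj Cb) 0)
           (row_mx Cb 0) (- l%:M).

Lemma cmx_lmi nx nv ny (X : 'M[R]_nx) (B : 'M[R]_(nx, nv))
    (Cb : 'M[R]_(ny, nx)) (l : R) :
  cmx (block_mx (block_mx X B B^T (- l%:M)) (col_mx Cb^T 0) (row_mx Cb 0) (- l%:M))
  = lmi_mx (cmx X) (cmx B) (cmx Cb) l%:C.
Proof.
by rewrite /lmi_mx !hadj_cmx !cmxE !map_block_mx map_col_mx map_row_mx !map_mxN
  !map_scalar_mx !map_mx0.
Qed.

End ComplexMatrix.

Section BoundedReal.
Variables (R : realType) (nx nv ny : nat).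
Local Notation C := R[i].
Local Open Scope complex_scope.
Variables (P N : 'M[C]_nx) (G : 'M[C]_(nx, nv)) (Cb : 'M[C]_(ny, nx)).
Hypothesis P_herm : hadj P = P.

Local Notation L l := (lmi_mx (P *m N + hadj N *m P) (- (P *m G)) Cb l).

Lemma lmi_form_response (s l : C) (x : 'cV[C]_nx) (v : 'cV[C]_nv) (y : 'cV[C]_ny) :
  conjc s = - s -> N *m x = s *: x - G *m v ->
  let xi := col_mx (col_mx x (- v)) y in
  hadj xi *m L l *m xi =
  - (l *: (hadj v *m v)) + hadj x *m hadj Cb *m y + hadj y *m Cb *m x
  - l *: (hadj y *m y).
Proof.
move=> s_imag resp xi.
rewrite /xi /lmi_mx !hadj_col hadjN !mul_row_block mul_mx_row add_row_mx
  !mul_row_col !mulmx0 ?mul0mx !addr0 hadjN hadjM P_herm.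
have PN_form : hadj x *m P *m N *m x =
    s *: (hadj x *m P *m x) - hadj x *m P *m G *m v.
  by rewrite -(mulmxA (hadj x *m P)) resp mulmxBr -scalemxAr ?mulmxA.
have NP_form : hadj x *m hadj N *m P *m x =
    conjc s *: (hadj x *m P *m x) - hadj v *m hadj G *m P *m x.
  by rewrite -hadjM resp hadjB hadjZ hadjM !mulmxBl -!scalemxAl ?mulmxA.
rewrite !(mulmxDl, mulmxDr, mulmxN, mulNmx, opprK, mul_mx_scalar) !mulmxA
  PN_form NP_form s_imag -!scalemxAl.
move: (hadj x *m P *m x) (hadj x *m P *m G *m v) (hadj v *m hadj G *m P *m x)
  (hadj y *m Cb *m x) (hadj v *m v) (hadj x *m hadj Cb *m y) (hadj y *m y).
by move=> ? ? ? ? ? ? ?; apply/matrixP => i j; rewrite !mxE; ring.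
Qed.

Variables (lam e : R).
Hypotheses (lam_gt0 : 0 < lam) (e_gt0 : 0 < e) (e_le_lam : e <= lam).
Hypothesis lmi_margin :
  forall xi, complex.Re ((hadj xi *m L lam%:C *m xi) 0 0) <= - e * cvnorm2 xi.

(* Test the LMI against xi = (x, -v, Cb x / lam). *)
Lemma response_estimate s (x : 'cV[C]_nx) (v : 'cV[C]_nv) :
  conjc s = - s -> N *m x = s *: x - G *m v ->
  lam^-1 * cvnorm2 (Cb *m x) - lam * cvnorm2 v <= - e * (cvnorm2 x + cvnorm2 v).
Proof.
move=> s_imag resp; set z := Cb *m x; set t := lam^-1.
have := lmi_margin (col_mx (col_mx x (- v)) (t%:C *: z)).
rewrite (lmi_form_response _ _ s_imag resp) !cvnorm2_col cvnorm2N.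
have -> : hadj x *m hadj Cb *m (t%:C *: z) = t%:C *: (hadj z *m z).
  by rewrite -hadjM -scalemxAr.
have -> : hadj (t%:C *: z) *m Cb *m x = t%:C *: (hadj z *m z).
  by rewrite hadjZ conjc_real -mulmxA -scalemxAl.
have -> : hadj (t%:C *: z) *m (t%:C *: z) = (t * t)%:C *: (hadj z *m z).
  by rewrite hadjZ conjc_real -scalemxAl -scalemxAr scalerA rmorphM.
rewrite -(Re_hadj_mulmx z) -(Re_hadj_mulmx v).
move: (hadj z *m z) (hadj v *m v) => Z V.
rewrite !mxE !(ReD, ReN, Re_realM).
have -> : lam * (t * t * complex.Re (Z 0 0)) = t * complex.Re (Z 0 0).
  by rewrite /t; field; rewrite gt_eqF.
have := mulr_ge0 (ltW e_gt0) (cvnorm2_ge0 (t%:C *: z)).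
lra.
Qed.

Lemma imag_shift_unitmx mu : (Complex 0 mu)%:M - N \in unitmx.
Proof.
rewrite -unitmx_tr unitmxE unitfE; apply/negP => /det0P [u u_neq0 uA].
have : ((Complex 0 mu)%:M - N) *m u^T = 0.
  by rewrite -[LHS]trmxK trmx_mul trmxK uA trmx0.
rewrite mulmxBl mul_scalar_mx => /eqP; rewrite subr_eq0 => /eqP u_eigen.
have resp : N *m u^T = Complex 0 mu *: u^T - G *m 0 by rewrite mulmx0 subr0 u_eigen.
have := response_estimate (conjc_imaginary mu) resp.
rewrite cvnorm2_0 !mulr0 !addr0 subr0.
have ut_gt0 : 0 < cvnorm2 u^T by apply: cvnorm2_gt0; rewrite trmx_eq0.
have inv_lam_ge0 : 0 <= lam^-1 by rewrite invr_ge0 ltW.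
have := mulr_ge0 inv_lam_ge0 (cvnorm2_ge0 (Cb *m u^T)).
have := mulr_gt0 e_gt0 ut_gt0.
lra.
Qed.

Lemma transfer_gain_le mu (v : 'cV[C]_nv) :
  cvnorm2 (Cb *m invmx ((Complex 0 mu)%:M - N) *m G *m v)
  <= lam * (lam - e) * cvnorm2 v.
Proof.
rewrite -!mulmxA; set x := invmx _ *m (G *m v).
have resp : N *m x = Complex 0 mu *: x - G *m v.
  have : ((Complex 0 mu)%:M - N) *m x = G *m v.
    by rewrite mulmxA mulmxV ?imag_shift_unitmx // mul1mx.
  by rewrite mulmxBl mul_scalar_mx => <-; rewrite opprB addrC subrK.
rewrite -[cvnorm2 (Cb *m x)](mulVKf (lt0r_neq0 lam_gt0)) -mulrA ler_pM2l //.
have := response_estimate (conjc_imaginary mu) resp.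
have := mulr_ge0 (ltW e_gt0) (cvnorm2_ge0 x).
lra.
Qed.

Theorem bounded_real_hinf_lt :
  (hinf_norm (fun s => - (Cb *m invmx (s%:M - N) *m G))%R < lam%:E)%E.
Proof.
have gain_ge0 : 0 <= lam * (lam - e) by apply: mulr_ge0; rewrite ?subr_ge0 // ltW.
apply: (le_lt_trans (hinf_norm_le (c := Num.sqrt (lam * (lam - e))) _)).
  move=> mu v; rewrite mulNmx !cvnormE cvnorm2N -sqrtrM // ler_sqrt.
    exact: transfer_gain_le.
  by rewrite mulr_ge0 ?cvnorm2_ge0.
rewrite lte_fin -[ltRHS]ger0_norm ?(ltW lam_gt0) // -sqrtr_sqr ltr_sqrt.
  by rewrite expr2 ltr_pM2l // gtrBl.
by rewrite exprn_gt0.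
Qed.

End BoundedReal.

Section ObserverGain.
Variables (F : comUnitRingType) (k m : nat).
Variables (P A : 'M[F]_k) (Rm Q : 'M[F]_(k, m)) (Ca : 'M[F]_(m, k)).
Hypotheses (P_unit : P \in unitmx) (P_sym : P^T = P).

Let M := 1%:M + invmx P *m Rm *m Ca.
Let N := M *m A - invmx P *m Q *m Ca.

Lemma mulmx_observer_gain : P *m M = P + Rm *m Ca.
Proof. by rewrite /M mulmxDr mulmx1 !mulmxA mulmxV // mul1mx. Qed.

Lemma observer_lyapunov :
  P *m N + N^T *m P = A^T *m P + A^T *m Ca^T *m Rm^T - Ca^T *m Q^T
                      + P *m A + Rm *m Ca *m A - Q *m Ca.
Proof.
have PN : P *m N = P *m A + Rm *m Ca *m A - Q *m Ca.
  by rewrite /N mulmxBr !mulmxA mulmx_observer_gain mulmxV // mul1mx mulmxDl.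
have -> : N^T *m P = (P *m N)^T by rewrite trmx_mul P_sym.
rewrite PN !linearB !linearD /= !trmx_mul P_sym !mulmxA.
move: (A^T *m P) (A^T *m Ca^T *m Rm^T) (Ca^T *m Q^T) (P *m A) (Rm *m Ca *m A) (Q *m Ca).
by move=> ? ? ? ? ? ?; apply/matrixP => i j; rewrite !mxE; ring.
Qed.

End ObserverGain.

Theorem proposition2 (R : realType) (n m ng nw r : nat) (hr : (0 < r)%N)
  (A : 'M[R]_n) (S : 'M[R]_(n, ng)) (C : 'M[R]_(m, n)) (Dw : 'M[R]_(n, nw))
  (P : 'M[R]_(n + (ng + (r - 1) * ng)))
  (Rm Q : 'M[R]_(n + (ng + (r - 1) * ng), m)) (lam : R) :
  let Aa := Aa r A S in
  let Da := Da ng r Dw in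
  let Ca := Ca ng r C in
  let Cb := Cbara R n ng r in
  let X := Aa^T *m P + Aa^T *m Ca^T *m Rm^T - Ca^T *m Q^T
           + P *m Aa + Rm *m Ca *m Aa - Q *m Ca in
  let B12 := - ((P + Rm *m Ca) *m Da) in
  posdef P -> 0 < lam ->
  negdef (block_mx (block_mx X B12 B12^T (- lam%:M)) (col_mx Cb^T 0)
                   (row_mx Cb 0) (- lam%:M)) ->
  let E := invmx P *m Rm in
  let K := invmx P *m Q in
  let M := 1%:M + E *m Ca in
  let N := M *m Aa - K *m Ca in
  let T := fun s : R[i] =>
    - (cmx Cb *m invmx (s%:M - cmx N) *m cmx M *m cmx Da) in
  (hinf_norm T < lam%:E)%E.
Proof.
move=> Aa Da Ca Cb X B12 P_pd lam_gt0 lmi; cbv zeta.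
set M := 1%:M + _; set N := M *m Aa - _.
have [P_sym _] := P_pd; have P_unit := posdef_unitmx P_pd.
have X_eq : X = P *m N + N^T *m P by rewrite observer_lyapunov.
have B12_eq : B12 = - (P *m (M *m Da)) by rewrite /B12 mulmxA mulmx_observer_gain.
have [e e_gt0 margin] := negdef_cmx_coercive lmi.
rewrite cmx_lmi X_eq B12_eq cmxN cmxD !cmxM -hadj_cmx in margin.
have -> : (fun s => - (cmx Cb *m invmx (s%:M - cmx N) *m cmx M *m cmx Da)) =
    fun s => - (cmx Cb *m invmx (s%:M - cmx N) *m (cmx M *m cmx Da)).
  by apply/funext => s; rewrite mulmxA.
have P_herm : hadj (cmx P) = cmx P by rewrite hadj_cmx P_sym.
have min_gt0 : 0 < Num.min e lam by rewrite lt_min e_gt0.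
have min_le : Num.min e lam <= lam by rewrite ge_min lexx orbT.
apply: (bounded_real_hinf_lt P_herm lam_gt0 min_gt0 min_le) => xi.
apply: le_trans (margin xi) _.
by rewrite !mulNr lerN2 ler_wpM2r ?cvnorm2_ge0 // ge_min lexx.
Qed.
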